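(* Let $M=\{M_\gamma\}_{\gamma\in\Gamma}$ and $N=\{N_\omega\}_{\omega\in\Omega}$ be defining families of functions on $\mathbb R^{k_1}$ and $\mathbb R^{k_2}$ respectively, and let $h\in\mathcal K(M\otimes N)$. Suppose $N$ satisfies: (I) for every $\omega\in\Omega$ there exist $\omega'\in\Omega$ and a bounded integrable nonnegative function $L$ on $\mathbb R^{k_2}$ with $N_\omega\le LN_{\omega'}$ and $L(y)\to0$ as $|y|\to\infty$; (II) for every $\omega\in\Omega$ there exist $\omega'\in\Omega$, a neighborhood $B$ of the origin in $\mathbb R^{k_2}$ and $C>0$ with $N_\omega(y)\le CN_{\omega'}(y+y')$ for all $y\in\mathbb R^{k_2}$, $y'\in B$. Then $h(x,\cdot)\in\mathcal K(N)$ for every $x\in\mathbb R^{k_1}$, and for every $v\in\mathcal K'(N)$ the function $h_v(x)=\langle v,h(x,\cdot)\rangle$ belongs to $\mathcal K(M)$. Moreover, for every multi-index $\mu\in\mathbb Z_+^{k_1}$, $\partial^\mu h_v(x)=\langle v,\partial^\mu_x h(x,\cdot)\rangle$.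
   Context: A defining family of functions on $\mathbb R^k$ is a family $M=\{M_\gamma\}_{\gamma\in\Gamma}$ of nonnegative measurable functions on $\mathbb R^k$, each bounded on bounded subsets of $\mathbb R^k$, such that: (a) for all $\gamma_1,\gamma_2\in\Gamma$ there are $\gamma\in\Gamma$ and $C>0$ with $M_\gamma\ge C(M_{\gamma_1}+M_{\gamma_2})$; (b) there is a countable $\Gamma'\subset\Gamma$ such that for every $\gamma\in\Gamma$ there are $\gamma'\in\Gamma'$ and $C>0$ with $CM_\gamma\le M_{\gamma'}$; (c) for every $x\in\mathbb R^k$ there are $\gamma\in\Gamma$, a neighborhood $O(x)$ of $x$ and $C>0$ with $M_\gamma(x')\ge C$ for all $x'\in O(x)$. $\mathcal K(M)$ is the space of smooth functions $f$ on $\mathbb R^k$ with finite seminorms $\|f\|_{\gamma,m}=\sup_{x\in\mathbb R^k,|\mu|\le m}M_\gamma(x)|\partial^\mu f(x)|$ for all $\gamma\in\Gamma$, $m\in\mathbb Z_+$, topologized by these seminorms; $\mathcal K'(N)$ is the continuous dual of $\mathcal K(N)$ and $\langle\cdot,\cdot\rangle$ the dual pairing. $M\otimes N$ is the family $\{(M\otimes N)_{\gamma\omega}\}_{(\gamma,\omega)\in\Gamma\times\Omega}$ on $\mathbb R^{k_1+k_2}$ given by $(M\otimes N)_{\gamma\omega}(x,y)=M_\gamma(x)N_\omega(y)$ (it is a defining family on $\mathbb R^{k_1+k_2}$). *)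

From HB Require Import structures.
From mathcomp Require Import all_boot all_order all_algebra.
From mathcomp Require Import all_classical all_reals all_analysis.
Set Implicit Arguments. Unset Strict Implicit. Unset Printing Implicit Defensive.
Import Order.TTheory GRing.Theory Num.Theory.
Import numFieldNormedType.Exports.
Local Open Scope classical_set_scope.
Local Open Scope ring_scope.

Section Defs.
Variable R : realType.

Definition ev (k : nat) (i : 'I_k) : 'rV[R]_k := delta_mx 0 i.

Definition pdiff (k : nat) (i : 'I_k) (f : 'rV[R]_k -> R) : 'rV[R]_k -> R :=
  fun x => 'D_(ev i) f x.

Fixpoint diter (k : nat) (s : seq 'I_k) (f : 'rV[R]_k -> R) : 'rV[R]_k -> R :=
  match s with
  | [::] => f
  | i :: s' => pdiff i (diter s' f)
  end.

Definition mindex (k : nat) := 'I_k -> nat.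
Definition msize (k : nat) (mu : mindex k) : nat := (\sum_(i < k) mu i)%N.
Definition pderiv (k : nat) (mu : mindex k) (f : 'rV[R]_k -> R) : 'rV[R]_k -> R :=
  diter (flatten [seq nseq (mu i) i | i <- enum 'I_k]) f.

Definition smooth (k : nat) (f : 'rV[R]_k -> R) : Prop :=
  forall s : seq 'I_k, continuous (diter s f) /\
    forall (i : 'I_k) (x : 'rV[R]_k), derivable (diter s f) x (ev i).

Definition borel_measurable (k : nat) (f : 'rV[R]_k -> R) : Prop :=
  forall U : set R, open U -> <<s (@open 'rV[R]_k) >> (f @^-1` U).

(* Lebesgue integral over R^k of a nonnegative Borel function, written as the
   iterated one-dimensional Lebesgue integral (Tonelli). *)
Fixpoint iterint (n : nat) (F : seq R -> \bar R) : \bar R :=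
  match n with
  | O => F [::]
  | n'.+1 => (\int[@lebesgue_measure R]_t iterint n' (fun s => F (t :: s)))%E
  end.
Definition vec_of_seq (k : nat) (s : seq R) : 'rV[R]_k := \row_i nth 0 s i.
Definition integral_Rk (k : nat) (f : 'rV[R]_k -> R) : \bar R :=
  iterint k (fun s => (f (vec_of_seq k s))%:E).

Definition defining_family (k : nat) (G : Type) (M : G -> 'rV[R]_k -> R) : Prop :=
  (forall g x, 0 <= M g x) /\
  (forall g, borel_measurable (M g)) /\
  (forall g (r : R), exists B : R, forall x, `|x| <= r -> M g x <= B) /\
  (forall g1 g2, exists g (C : R), 0 < C /\ forall x, C * (M g1 x + M g2 x) <= M g x) /\
  (exists G' : set G, countable G' /\
     forall g, exists2 g', G' g' & exists C : R, 0 < C /\ forall x, C * M g x <= M g' x) /\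
  (forall x : 'rV[R]_k, exists g (C : R), 0 < C /\ \forall x' \near x, C <= M g x').

Definition seminorm (k : nat) (G : Type) (M : G -> 'rV[R]_k -> R) (g : G) (m : nat)
    (f : 'rV[R]_k -> R) : \bar R :=
  ereal_sup [set r | exists (x : 'rV[R]_k) (mu : mindex k),
     (msize mu <= m)%N /\ r = (M g x * `|pderiv mu f x|)%:E].

Definition inK (k : nat) (G : Type) (M : G -> 'rV[R]_k -> R) (f : 'rV[R]_k -> R) : Prop :=
  smooth f /\ forall g m, (seminorm M g m f < +oo)%E.

(* v is an element of K'(M): a linear functional on K(M), continuous for the
   locally convex topology generated by the seminorms ||.||_{g,m}, i.e. bounded
   by a constant times the maximum of finitely many of these seminorms. *)
Definition in_dual (k : nat) (G : Type) (M : G -> 'rV[R]_k -> R)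
    (v : ('rV[R]_k -> R) -> R) : Prop :=
  (forall (a : R) f1 f2, inK M f1 -> inK M f2 ->
      v (fun y => a * f1 y + f2 y) = a * v f1 + v f2) /\
  (exists (s : seq (G * nat)) (C : R), 0 <= C /\
      forall f, inK M f ->
        ((`|v f|)%:E <= C%:E * \big[Order.max/0%E]_(p <- s) seminorm M p.1 p.2 f)%E).

Definition tensor_family (k1 k2 : nat) (G O : Type)
    (M : G -> 'rV[R]_k1 -> R) (N : O -> 'rV[R]_k2 -> R) :
    G * O -> 'rV[R]_(k1 + k2) -> R :=
  fun p z => M p.1 (lsubmx z) * N p.2 (rsubmx z).

Definition condI (k : nat) (O : Type) (N : O -> 'rV[R]_k -> R) : Prop :=
  forall w, exists w' (L : 'rV[R]_k -> R),
    (forall y, 0 <= L y) /\ borel_measurable L /\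
    (exists B : R, forall y, L y <= B) /\
    (integral_Rk L < +oo)%E /\
    (forall y, N w y <= L y * N w' y) /\
    (forall eps : R, 0 < eps -> exists r : R, forall y, r < `|y| -> L y < eps).

Definition condII (k : nat) (O : Type) (N : O -> 'rV[R]_k -> R) : Prop :=
  forall w, exists w' (B : set 'rV[R]_k) (C : R),
    nbhs (0 : 'rV[R]_k) B /\ 0 < C /\
    forall y y', B y' -> N w y <= C * N w' (y + y').

End Defs.

(* Fix x. By (c) there are g and C > 0 with M_g >= C near x, so the bounds
   M_g(x') N_w(y) |d h(x',y)| <= S that h in K(M (x) N) provides become bounds
   N_w(y) |d h(x',y)| <= S / C, uniform in y and in x' near x.  A functional v in K'(N) is dominated by finitely
   many seminorms ||.||_{w,m}; applied to the second order Taylor remainder of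
   h in the direction e_i this gives
     |t^-1 (h_v(x + t e_i) - h_v(x)) - <v, d_i h(x,.)>| = O(|t|),
   so d_i h_v = (d_i h)_v, and applied to the first order increment (taken one
   coordinate at a time) it gives continuity of h_v.  Iterating, h_v is smooth
   with d^mu h_v = <v, d^mu_x h(x,.)>, and M_g(x) |d^mu h_v(x)| is bounded by a
   multiple of sup M_g N_w |d h|. *)

From HB Require Import structures.
From mathcomp Require Import all_boot all_order all_algebra.
From mathcomp Require Import all_classical all_reals all_analysis.
From mathcomp.algebra_tactics Require Import ring lra.
Set Implicit Arguments.
Unset Strict Implicit.
Unset Printing Implicit Defensive.
Import Order.TTheory GRing.Theory Num.Theory.
Import numFieldNormedType.Exports.
Local Open Scope classical_set_scope.
Local Open Scope ring_scope.

Section AffineComposition.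
Variables (R : numFieldType) (U V W : normedModType R).
Variables (g : V -> W) (phi : U -> V) (a e : U) (E : V).
Hypothesis phi_affine : forall t : R, phi (t *: e + a) = t *: E + phi a.

Let quotient_comp_affine :
  (fun t : R => t^-1 *: (((g \o phi) \o shift a) (t *: e) - (g \o phi) a)) =
  (fun t : R => t^-1 *: ((g \o shift (phi a)) (t *: E) - g (phi a))).
Proof. by apply/funext => t /=; rewrite /shift phi_affine. Qed.

Lemma derive_comp_affine : 'D_e (g \o phi) a = 'D_E g (phi a).
Proof. by rewrite /derive quotient_comp_affine. Qed.

Lemma derivable_comp_affine : derivable (g \o phi) a e = derivable g (phi a) E.
Proof. by rewrite /derivable quotient_comp_affine. Qed.

End AffineComposition.

Section Lines.
Variables (R : numFieldType) (V W : normedModType R) (f : V -> W) (z E : V).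

Lemma derive_along_line (s : R) :
  'D_1 (fun t : R => f (z + t *: E)) s = 'D_E f (z + s *: E).
Proof. by apply: derive_comp_affine => t; rewrite /= scaler1 scalerDl addrCA. Qed.

Lemma derivable_along_line (s : R) :
  derivable f (z + s *: E) E -> derivable (fun t : R => f (z + t *: E)) s 1.
Proof.
rewrite -(@derivable_comp_affine _ _ _ _ f (fun t : R => z + t *: E) s 1 E) // => t.
by rewrite /= scaler1 scalerDl addrCA.
Qed.

End Lines.

Section MeanValue.
Variable R : realType.

Lemma mean_value_le (phi : R -> R) (t B : R) :
  (forall s, derivable phi s 1) ->
  (forall s, `|s| <= `|t| -> `|'D_1 phi s| <= B) ->
  `|phi t - phi 0| <= B * `|t|.
Proof.
move=> dphi bnd.
have mvt a b : a <= b ->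
    exists2 c, c \in `[a, b] & phi b - phi a = 'D_1 phi c * (b - a).
  move=> ab; apply: MVT_segment ab _ _ => [x _|]; first exact/derivableP.
  by apply: derivable_within_continuous => x _; exact: dphi.
have [t0|t0] := leP 0 t.
  have [c] := mvt 0 t t0; rewrite in_itv /= => /andP[c0 ct] ->.
  by rewrite subr0 normrM (ger0_norm t0) ler_wpM2r // bnd // !ger0_norm.
have [c] := mvt t 0 (ltW t0); rewrite in_itv /= => /andP[tc c0] Et.
rewrite distrC Et sub0r normrM normrN ler_wpM2r // bnd //.
by rewrite (ler0_norm c0) (ltr0_norm t0) lerN2.
Qed.

Lemma weighted_mean_value_le (phi : R -> R) (c t B : R) : 0 <= c ->
  (forall s, derivable phi s 1) ->
  (forall s, `|s| <= `|t| -> c * `|'D_1 phi s| <= B) ->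
  c * `|phi t - phi 0| <= B * `|t|.
Proof.
move=> c0 dphi bnd.
have B0 : 0 <= B by apply: le_trans (bnd 0 _); rewrite ?normr0 ?mulr_ge0.
have [->|cn0] := eqVneq c 0; first by rewrite mul0r mulr_ge0.
have cp : 0 < c by rewrite lt_def cn0 c0.
rewrite -ler_pdivlMl // mulrA; apply: mean_value_le => // s st.
by rewrite ler_pdivlMl // bnd.
Qed.

End MeanValue.

Section AlongLine.
Variables (R : realType) (V : normedModType R) (f : V -> R) (z E : V).
Hypothesis df : forall s : R, derivable f (z + s *: E) E.

Lemma mean_value_along (t : R) : 0 <= t ->
  exists2 c, 0 <= c <= t & f (z + t *: E) - f z = 'D_E f (z + c *: E) * t.
Proof.
move=> t0.
have dphi (r : R) : derivable (fun s : R => f (z + s *: E)) r 1.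
  exact: derivable_along_line.
have [c] := MVT_segment t0 (fun r _ => derivableP (dphi r))
  (derivable_within_continuous (fun r _ => dphi r)).
by rewrite in_itv /= scale0r addr0 subr0 derive_along_line => ct ->; exists c.
Qed.

Lemma increment_le_along (c t B : R) : 0 <= c ->
  (forall s, `|s| <= `|t| -> c * `|'D_E f (z + s *: E)| <= B) ->
  c * `|f (z + t *: E) - f z| <= B * `|t|.
Proof.
move=> c0 bnd.
have dphi (r : R) : derivable (fun s : R => f (z + s *: E)) r 1.
  exact: derivable_along_line.
have := weighted_mean_value_le c0 dphi.
by rewrite /= scale0r addr0; apply=> s st; rewrite derive_along_line bnd.
Qed.

End AlongLine.

Lemma taylor_remainder_le_along (R : realType) (V : normedModType R) (f : V -> R)
    (z E : V) (c t B : R) :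
  (forall s : R, derivable f (z + s *: E) E) ->
  (forall s : R, derivable ('D_E f) (z + s *: E) E) -> 0 <= c ->
  (forall s, `|s| <= `|t| -> c * `|'D_E ('D_E f) (z + s *: E)| <= B) ->
  c * `|f (z + t *: E) - f z - t * 'D_E f z| <= B * (`|t| * `|t|).
Proof.
move=> df ddf c0 bnd.
have B0 : 0 <= B by apply: le_trans (bnd 0 _); rewrite ?normr0 ?mulr_ge0.
set a := 'D_E f z.
pose phi := (fun s : R => f (z + s *: E)) - a \*: (@id R).
have Dphi s : 'D_1 phi s = 'D_E f (z + s *: E) - a.
  have := is_deriveB (derivableP (derivable_along_line (df s)))
    (is_deriveZ a (is_derive_id s 1)).
  move=> isd; rewrite isd.(derive_val) derive_along_line.
  by congr (_ - _); exact: mulr1.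
have -> : f (z + t *: E) - f z - t * a = phi t - phi 0.
  rewrite /phi !fctE /= scale0r addr0 scaler0 subr0 addrAC.
  by congr (_ - _ - _); exact: mulrC.
rewrite mulrA; apply: weighted_mean_value_le => // [s|s st].
  apply: derivableB; last exact: derivableZ.
  exact: derivable_along_line.
rewrite Dphi; apply: le_trans (increment_le_along ddf c0 _) _.
  by move=> r rs; apply: bnd; apply: le_trans st.
by rewrite ler_wpM2l.
Qed.

Section SecondDifference.
Variables (R : realType) (V : normedModType R) (f : V -> R) (u w : V).
Hypotheses (df : forall p, derivable f p u) (ddf : forall p, derivable ('D_u f) p w).

Lemma second_difference_mean (a : V) (t : R) : 0 <= t ->
  exists2 p, `|p - a| <= t * (`|u| + `|w|) &
    f (a + t *: u + t *: w) - f (a + t *: u) - (f (a + t *: w) - f a) =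
    t * t * 'D_w ('D_u f) p.
Proof.
move=> t0.
pose g := (fun x => f (x + t *: w)) - f.
have shift_affine x (r : R) : r *: u + x + t *: w = r *: u + (x + t *: w).
  by rewrite addrA.
have dshift x : derivable (fun x => f (x + t *: w)) x u.
  by rewrite (derivable_comp_affine f (shift_affine x)).
have Dg x : 'D_u g x = 'D_u f (x + t *: w) - 'D_u f x.
  by rewrite deriveB // (derive_comp_affine f (shift_affine x)).
have dg x : derivable g x u by apply: derivableB; [exact: dshift | exact: df].
have [c c0t Ec] := mean_value_along (fun s => dg (a + s *: u)) t0.
have dDf (s : R) : derivable ('D_u f) (a + c *: u + s *: w) w by exact: ddf.
have [d d0t Ed] := mean_value_along dDf t0.
exists (a + c *: u + d *: w).
  move: c0t d0t => /andP[c0 ct] /andP[d0 dt].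
  rewrite -[a + _ + _]addrA [_ - a]addrC addKr mulrDr (le_trans (ler_normD _ _)) // lerD //.
    by rewrite normrZ ger0_norm // ler_wpM2r.
  by rewrite normrZ ger0_norm // ler_wpM2r.
transitivity (g (a + t *: u) - g a); first by [].
by rewrite Ec Dg Ed -mulrA mulrC.
Qed.

End SecondDifference.

Section Schwarz.
Variables (R : realType) (V : normedModType R) (f : V -> R) (u w : V).
Hypotheses (dfu : forall p, derivable f p u) (dfw : forall p, derivable f p w).
Hypotheses (dfuw : forall p, derivable ('D_u f) p w) (dfwu : forall p, derivable ('D_w f) p u).

Lemma mixed_partials_meet (a : V) (d : R) : 0 < d ->
  exists p1 p2, [/\ `|p1 - a| < d, `|p2 - a| < d & 'D_w ('D_u f) p1 = 'D_u ('D_w f) p2].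
Proof.
move=> d0; pose K := `|u| + `|w| + 1.
have K0 : 0 < K by rewrite ltr_wpDl ?addr_ge0.
pose t := d / 2 / K.
have t0 : 0 < t by rewrite !divr_gt0.
have tK : t * (`|u| + `|w|) < d.
  apply: (@le_lt_trans _ _ (t * K)); first by rewrite ler_pM2l // /K lerDl.
  rewrite /t divfK ?gt_eqF //; lra.
have [p1 p1a E1] := second_difference_mean dfu dfuw a (ltW t0).
have [p2 p2a E2] := second_difference_mean dfw dfwu a (ltW t0).
exists p1, p2; split; first exact: le_lt_trans p1a tK.
  by apply: le_lt_trans p2a _; rewrite addrC.
apply: (mulfI (x := t * t)); first by rewrite mulf_neq0 // gt_eqF.
rewrite -E1 -E2 [a + t *: w + _]addrAC.
by set X := f (_ + _ + _); set Y := f (a + t *: u); set Z := f (a + t *: w); ring.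
Qed.

Hypotheses (cuw : continuous ('D_w ('D_u f))) (cwu : continuous ('D_u ('D_w f))).

Lemma deriveC : 'D_w ('D_u f) = 'D_u ('D_w f).
Proof.
apply/funext => a; apply/eqP; rewrite -subr_eq0 -normr_le0.
apply/ler_addgt0Pr => e e0; rewrite add0r.
have e2 : 0 < e / 2 by rewrite divr_gt0.
have near_a (P : V -> R) : continuous P ->
    exists2 d : R, 0 < d & forall p, `|p - a| < d -> `|P a - P p| < e / 2.
  move=> cP; have /cvgrPdist_lt/(_ _ e2) := cP a.
  case/nbhs_ballP => d d0 sub; exists d => // p pa; apply: sub.
  by rewrite -ball_normE /= distrC.
have [d1 d10 near1] := near_a _ cuw.
have [d2 d20 near2] := near_a _ cwu.
have d0 : 0 < Num.min d1 d2 by rewrite lt_min d10 d20.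
have [p1 [p2 [p1a p2a E]]] := mixed_partials_meet a d0.
have -> : 'D_w ('D_u f) a - 'D_u ('D_w f) a =
    ('D_w ('D_u f) a - 'D_w ('D_u f) p1) + ('D_u ('D_w f) p2 - 'D_u ('D_w f) a).
  by rewrite E addrA subrK.
apply: le_trans (ler_normD _ _) _; rewrite [e]splitr.
apply: lerD; apply: ltW.
  by apply: near1; apply: lt_le_trans p1a _; rewrite ge_min lexx.
by rewrite distrC; apply: near2; apply: lt_le_trans p2a _; rewrite ge_min lexx orbT.
Qed.

End Schwarz.

Lemma mulr_lt_of_lt_divD1 (R : realFieldType) (K a e : R) :
  0 <= K -> 0 <= a -> a < e / (K + 1) -> K * a < e.
Proof.
move=> K0 a0; rewrite ltr_pdivlMr ?ltr_wpDl //; apply: le_lt_trans.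
by rewrite mulrDr mulr1 mulrC lerDl.
Qed.

Lemma mx_norm_entry_le (R : realDomainType) m n (A : 'M[R]_(m, n)) i j :
  `|A i j| <= `|A|.
Proof.
by rewrite [leRHS]/Num.norm /= mx_normrE; apply/bigmax_geP; right; exists (i, j).
Qed.

Lemma norm_row_mx_le (R : realDomainType) m n1 n2 (A : 'M[R]_(m, n1)) (B : 'M[R]_(m, n2)) :
  `|row_mx A B| <= `|A| + `|B|.
Proof.
rewrite [leLHS]/Num.norm /= mx_normrE; apply/bigmax_leP; split => [|[i j] _ /=].
  by rewrite addr_ge0.
rewrite mxE; case: splitP => l _.
  by rewrite (le_trans (mx_norm_entry_le A i l)) // lerDl.
by rewrite (le_trans (mx_norm_entry_le B i l)) // lerDr.
Qed.

Lemma norm_ev_le1 (R : realType) n (i : 'I_n) : `|ev R i| <= 1.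
Proof.
rewrite [leLHS]/Num.norm /= mx_normrE; apply/bigmax_leP; split => // -[a b] _ /=.
by rewrite /ev mxE; case: eqP => _; case: eqP => _ /=; rewrite ?normr1 ?normr0.
Qed.

Section Smooth.
Variables (R : realType) (n : nat).
Implicit Types (f : 'rV[R]_n -> R) (s : seq 'I_n) (mu : mindex n).

Lemma diter_cat s1 s2 f : diter (s1 ++ s2) f = diter s1 (diter s2 f).
Proof. by elim: s1 => //= i s1 ->. Qed.

Lemma smooth_diter s f : smooth f -> smooth (diter s f).
Proof. by move=> sf s'; rewrite -diter_cat; apply: sf. Qed.

Lemma pdiffC f i j : smooth f -> pdiff i (pdiff j f) = pdiff j (pdiff i f).
Proof.
move=> sf; apply: deriveC => [p|p|p|p||].
- exact: (sf [::]).2.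
- exact: (sf [::]).2.
- exact: (sf [:: j]).2.
- exact: (sf [:: i]).2.
- exact: (sf [:: i; j]).1.
- exact: (sf [:: j; i]).1.
Qed.

Lemma perm_diter f s1 s2 : smooth f -> perm_eq s1 s2 -> diter s1 f = diter s2 f.
Proof.
move=> sf; elim: s2 s1 => [|j s2 IH] s1 ps; first by move: ps => /perm_nilP ->.
have js : j \in s1 by rewrite (perm_mem ps) mem_head.
case: (splitPr js) ps => l r ps.
have -> : diter (l ++ j :: r) f = diter (j :: l ++ r) f.
  by elim: l {ps} => //= i l ->; rewrite pdiffC //; exact: smooth_diter.
rewrite /= (IH (l ++ r)) // -(perm_cons j); apply: perm_trans ps.
by rewrite perm_sym (perm_catCA l [:: j] r).
Qed.

Definition pderiv_seq mu : seq 'I_n := flatten [seq nseq (mu i) i | i <- enum 'I_n].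

Definition mindex_of s : mindex n := fun i => count_mem i s.

Lemma pderivE mu f : pderiv mu f = diter (pderiv_seq mu) f.
Proof. by []. Qed.

Lemma size_pderiv_seq mu : size (pderiv_seq mu) = msize mu.
Proof.
rewrite size_flatten /shape -map_comp sumnE big_map big_enum /=.
by apply: eq_bigr => i _; rewrite /= size_nseq.
Qed.

Lemma perm_pderiv_seq_mindex_of s : perm_eq (pderiv_seq (mindex_of s)) s.
Proof.
apply/allP => x _ /=; apply/eqP.
rewrite count_flatten -map_comp sumnE big_map big_enum /= (bigD1 x) //=.
rewrite count_nseq /= eqxx mul1n big1 ?addn0 // => i /negbTE ix.
by rewrite /= count_nseq /= ix.
Qed.

Lemma msize_mindex_of s : msize (mindex_of s) = size s.
Proof. by rewrite -size_pderiv_seq (perm_size (perm_pderiv_seq_mindex_of s)). Qed.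

Lemma diter_pderiv f s : smooth f -> diter s f = pderiv (mindex_of s) f.
Proof. by move=> sf; rewrite pderivE (perm_diter sf (perm_pderiv_seq_mindex_of s)). Qed.

Lemma diterZ s a f : smooth f -> diter s (fun y => a * f y) = fun y => a * diter s f y.
Proof.
move=> sf; elim: s => //= i s ->; apply/funext => y.
have -> : (fun y => a * diter s f y) = a \*: diter s f by [].
by rewrite /pdiff deriveZ //; exact: (sf s).2.
Qed.

Lemma diterB s f1 f2 : smooth f1 -> smooth f2 ->
  diter s (fun y => f1 y - f2 y) = fun y => diter s f1 y - diter s f2 y.
Proof.
move=> s1 s2; elim: s => //= i s ->; apply/funext => y.
have -> : (fun y => diter s f1 y - diter s f2 y) = diter s f1 - diter s f2 by [].
by rewrite /pdiff deriveB //; [exact: (s1 s).2 | exact: (s2 s).2].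
Qed.

Lemma smoothZ a f : smooth f -> smooth (fun y => a * f y).
Proof.
move=> sf s; rewrite diterZ //.
have -> : (fun y => a * diter s f y) = a \*: diter s f by [].
split=> [y|i y]; last by apply: derivableZ; exact: (sf s).2.
by apply: continuousZ; [exact: cst_continuous | exact: (sf s).1].
Qed.

Lemma smoothB f1 f2 : smooth f1 -> smooth f2 -> smooth (fun y => f1 y - f2 y).
Proof.
move=> s1 s2 s; rewrite diterB //.
have -> : (fun y => diter s f1 y - diter s f2 y) = diter s f1 - diter s f2 by [].
split=> [y|i y]; first by apply: continuousB; [exact: (s1 s).1 | exact: (s2 s).1].
by apply: derivableB; [exact: (s1 s).2 | exact: (s2 s).2].
Qed.

Lemma diter_cst0 s : diter s (fun _ : 'rV[R]_n => 0) = fun _ => 0.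
Proof. by elim: s => //= i s ->; apply/funext => y; exact: derive_cst. Qed.

Lemma smooth_cst0 : smooth (fun _ : 'rV[R]_n => 0).
Proof.
move=> s; rewrite diter_cst0; split=> [y|i y]; first exact: cst_continuous.
exact: derivable_cst.
Qed.

End Smooth.

Section CoordinatePath.
Variables (R : realType) (n : nat) (f : 'rV[R]_n -> R) (x d : 'rV[R]_n).
Hypothesis df : forall l p, derivable f p (ev R l).

Lemma norm_coordinate_path_le (s : seq 'I_n) :
  `|\sum_(l <- s) d 0 l *: ev R l| <= (size s)%:R * `|d|.
Proof.
elim: s => [|l s IH]; first by rewrite big_nil normr0 mul0r.
rewrite big_cons /= -natr1 mulrDl mul1r addrC (le_trans (ler_normD _ _)) // lerD //.
by rewrite normrZ -[leRHS]mulr1 ler_pM ?mx_norm_entry_le ?norm_ev_le1.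
Qed.

Lemma increment_le_coordinate_path (c B r : R) (s : seq 'I_n) : 0 <= c ->
  (forall q l, `|q - x| <= r -> c * `|pdiff l f q| <= B) ->
  (size s)%:R * `|d| <= r ->
  c * `|f (x + \sum_(l <- s) d 0 l *: ev R l) - f x| <= (size s)%:R * B * `|d|.
Proof.
move=> c0 bnd; elim: s => [|l s IH] sr.
  by rewrite big_nil addr0 subrr normr0 !mul0r mulr0.
have r0 : 0 <= r := le_trans (mulr_ge0 (ler0n _ _) (normr_ge0 d)) sr.
have B0 : 0 <= B.
  by apply: le_trans (bnd x l _); rewrite ?mulr_ge0 // subrr normr0.
set p := x + \sum_(j <- s) d 0 j *: ev R j.
have ps : `|p - x| <= (size s)%:R * `|d| by rewrite addrC addKr norm_coordinate_path_le.
have dl : `|d 0 l| <= `|d| := mx_norm_entry_le d 0 l.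
have -> : x + \sum_(j <- l :: s) d 0 j *: ev R j = p + d 0 l *: ev R l.
  by rewrite big_cons addrCA addrC.
have -> : f (p + d 0 l *: ev R l) - f x =
    (f (p + d 0 l *: ev R l) - f p) + (f p - f x) by rewrite addrA subrK.
rewrite (le_trans (ler_wpM2l c0 (ler_normD _ _))) // mulrDr /= -natr1 !mulrDl mul1r.
rewrite addrC; apply: lerD.
  by apply: IH; apply: le_trans sr; rewrite ler_wpM2r // ler_nat.
apply: le_trans (ler_wpM2l B0 dl).
apply: increment_le_along c0 _ => [t|t tl]; first exact: df.
apply: bnd; rewrite addrAC (le_trans (ler_normD _ _)) //; apply: le_trans sr => /=.
rewrite -natr1 mulrDl mul1r lerD // normrZ -[leRHS]mulr1 ler_pM ?norm_ev_le1 //.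
exact: le_trans tl dl.
Qed.

Lemma increment_le_coordinates (c B r : R) : 0 <= c ->
  (forall q l, `|q - x| <= r -> c * `|pdiff l f q| <= B) ->
  n%:R * `|d| <= r -> c * `|f (x + d) - f x| <= n%:R * B * `|d|.
Proof.
move=> c0 bnd dr.
have := increment_le_coordinate_path (s := enum 'I_n) c0 bnd.
rewrite size_enum_ord big_enum /=.
by rewrite [\sum_(l < n) _](_ : _ = d) ?[RHS](matrix_sum_delta d) ?big_ord1 //; apply.
Qed.

End CoordinatePath.

Section RowSection.
Variables (R : realType) (k1 k2 : nat).
Implicit Types (x : 'rV[R]_k1) (y : 'rV[R]_k2) (F : 'rV[R]_(k1 + k2) -> R).

Lemma row_mx_shiftl x y i (t : R) :
  row_mx (t *: ev R i + x) y = t *: ev R (lshift k2 i) + row_mx x y.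
Proof. by rewrite /ev delta_mx_lshift scale_row_mx add_row_mx scaler0 add0r. Qed.

Lemma row_mx_shiftr x y i (t : R) :
  row_mx x (t *: ev R i + y) = t *: ev R (rshift k1 i) + row_mx x y.
Proof. by rewrite /ev delta_mx_rshift scale_row_mx add_row_mx scaler0 add0r. Qed.

Lemma diter_row_mxl F y s :
  diter s (fun x => F (row_mx x y)) =
  fun x => diter (map (@lshift k1 k2) s) F (row_mx x y).
Proof.
elim: s => //= i s ->; apply/funext => x.
exact: (derive_comp_affine _ (row_mx_shiftl x y i)).
Qed.

Lemma diter_row_mxr F x s :
  diter s (fun y => F (row_mx x y)) =
  fun y => diter (map (@rshift k1 k2) s) F (row_mx x y).
Proof.
elim: s => //= i s ->; apply/funext => y.
exact: (derive_comp_affine _ (row_mx_shiftr x y i)).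
Qed.

Lemma continuous_row_mxr x : continuous (@row_mx R 1 k1 k2 x).
Proof.
move=> y0; apply/(@cvgrPdist_lt _ _ _ (nbhs y0) (nbhs_filter y0)) => e e0.
apply/nbhs_ballP; exists e => // y.
rewrite -ball_normE /= opp_row_mx add_row_mx subrr => y0y.
by rewrite (le_lt_trans (norm_row_mx_le _ _)) // normr0 add0r.
Qed.

Lemma smooth_row_mxr F x : smooth F -> smooth (fun y => F (row_mx x y)).
Proof.
move=> sF s; rewrite diter_row_mxr; split=> [y|i y].
  by apply: continuous_comp; [exact: continuous_row_mxr | exact: (sF _).1].
rewrite (derivable_comp_affine _ (row_mx_shiftr x y i)).
exact: (sF _).2.
Qed.

End RowSection.

Section Seminorm.
Variables (R : realType) (k : nat) (T : Type) (M : T -> 'rV[R]_k -> R).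
Implicit Types (f : 'rV[R]_k -> R).

Lemma seminorm_le g m f (B : R) :
  (forall x mu, (msize mu <= m)%N -> M g x * `|pderiv mu f x| <= B) ->
  (seminorm M g m f <= B%:E)%E.
Proof. by move=> H; apply: ge_ereal_sup => _ [x [mu [hm ->]]]; rewrite lee_fin H. Qed.

Lemma seminorm_bounded g m f : (seminorm M g m f < +oo)%E ->
  exists B : R, forall x mu, (msize mu <= m)%N -> M g x * `|pderiv mu f x| <= B.
Proof.
have ub x mu : (msize mu <= m)%N -> ((M g x * `|pderiv mu f x|)%:E <= seminorm M g m f)%E.
  by move=> hm; apply: ereal_sup_ubound; exists x, mu.
case: (seminorm M g m f) ub => [r | // | ] ub _.
  by exists r => x mu hm; rewrite -lee_fin ub.
by exists 0 => x mu hm; have := ub x mu hm; rewrite leeNy_eq.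
Qed.

Lemma inK_cst0 : inK M (fun _ => 0).
Proof.
split=> [|g m]; first exact: smooth_cst0.
apply: le_lt_trans (seminorm_le (B := 0) _) (ltry _) => x mu _.
by rewrite pderivE diter_cst0 normr0 mulr0.
Qed.

Lemma inKZ a f : inK M f -> inK M (fun y => a * f y).
Proof.
case=> sf bf; split=> [|g m]; first exact: smoothZ.
have [B HB] := seminorm_bounded (bf g m).
apply: le_lt_trans (seminorm_le (B := `|a| * B) _) (ltry _) => x mu hmu.
by rewrite pderivE diterZ // normrM mulrCA ler_wpM2l //; exact: HB.
Qed.

Hypothesis M_ge0 : forall g x, 0 <= M g x.

Lemma inKB f1 f2 : inK M f1 -> inK M f2 -> inK M (fun y => f1 y - f2 y).
Proof.
case=> s1 b1 [s2 b2]; split=> [|g m]; first exact: smoothB.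
have [B1 H1] := seminorm_bounded (b1 g m).
have [B2 H2] := seminorm_bounded (b2 g m).
apply: le_lt_trans (seminorm_le (B := B1 + B2) _) (ltry _) => x mu hmu.
rewrite pderivE diterB // (le_trans (ler_wpM2l (M_ge0 g x) (ler_normB _ _))) //.
by rewrite mulrDr lerD //; [exact: H1 | exact: H2].
Qed.

End Seminorm.

Section Dual.
Variables (R : realType) (k : nat) (T : Type) (N : T -> 'rV[R]_k -> R).
Variable v : ('rV[R]_k -> R) -> R.
Hypothesis v_dual : in_dual N v.
Implicit Types (f : 'rV[R]_k -> R).

Lemma dual0 : v (fun _ => 0) = 0.
Proof.
have E : (fun y : 'rV[R]_k => 1 * (fun=> 0 : R) y + (fun=> 0) y) = fun=> 0.
  by apply/funext => y; rewrite mulr0 addr0.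
have := v_dual.1 1 _ _ (@inK_cst0 _ _ _ N) (@inK_cst0 _ _ _ N).
by rewrite E mul1r -[X in X = _]addr0 => /addrI <-.
Qed.

Lemma dualZ a f : inK N f -> v (fun y => a * f y) = a * v f.
Proof.
move=> Kf; have := v_dual.1 a f _ Kf (@inK_cst0 _ _ _ N).
by rewrite dual0 addr0 => <-; congr v; apply/funext => y; rewrite addr0.
Qed.

Lemma dualB f1 f2 : inK N f1 -> inK N f2 -> v (fun y => f1 y - f2 y) = v f1 - v f2.
Proof.
move=> K1 K2; have := v_dual.1 (-1) f2 f1 K2 K1.
by rewrite mulN1r addrC => <-; congr v; apply/funext => y; rewrite mulN1r addrC.
Qed.

Lemma dual_bound : exists (s : seq (T * nat)) (C : R), 0 <= C /\
  forall f (B : R), 0 <= B -> inK N f ->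
  (forall p, List.In p s -> forall y nu, (msize nu <= p.2)%N ->
     N p.1 y * `|pderiv nu f y| <= B) ->
  `|v f| <= C * B.
Proof.
have [s [C [C0 vC]]] := v_dual.2; exists s, C; split => // f B B0 Kf bnd.
have sB : (\big[Order.max/0%E]_(p <- s) seminorm N p.1 p.2 f <= B%:E)%E.
  elim: s {vC} bnd => [|p s IH] bnd; first by rewrite big_nil lee_fin.
  rewrite big_cons ge_max seminorm_le => [|y nu]; last by apply: bnd; left.
  by apply: IH => q qs; apply: bnd; right.
by rewrite -lee_fin EFinM (le_trans (vC f Kf)) // lee_wpmul2l // lee_fin.
Qed.

End Dual.

Section TensorSection.
Variables (R : realType) (k1 k2 : nat) (G O : Type).
Variables (M : G -> 'rV[R]_k1 -> R) (N : O -> 'rV[R]_k2 -> R).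
Hypothesis M_ge0 : forall g x, 0 <= M g x.
Hypothesis N_ge0 : forall w y, 0 <= N w y.
Hypothesis M_locally_pos :
  forall x : 'rV[R]_k1, exists g (C : R), 0 < C /\ \forall x' \near x, C <= M g x'.
Implicit Types (F : 'rV[R]_(k1 + k2) -> R) (x : 'rV[R]_k1) (y : 'rV[R]_k2).

Definition tensor_bounded F := smooth F /\
  forall g w (m : nat), exists S : R, forall z (s : seq 'I_(k1 + k2)),
    (size s <= m)%N -> M g (lsubmx z) * N w (rsubmx z) * `|diter s F z| <= S.

Lemma inK_tensor_bounded F : inK (tensor_family M N) F -> tensor_bounded F.
Proof.
case=> sF bF; split=> // g w m.
have [S HS] := seminorm_bounded (bF (g, w) m).
exists S => z s hs; rewrite (diter_pderiv s sF).
by apply: HS; rewrite msize_mindex_of.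
Qed.

Lemma tensor_bounded_diter F s : tensor_bounded F -> tensor_bounded (diter s F).
Proof.
case=> sF bF; split=> [|g w m]; first exact: smooth_diter.
have [S HS] := bF g w (m + size s)%N; exists S => z s' hs'.
by rewrite -diter_cat; apply: HS; rewrite size_cat leq_add2r.
Qed.

Lemma tensor_bounded_seq F g (ws : seq (O * nat)) m : tensor_bounded F ->
  exists S, 0 <= S /\ forall p, List.In p ws -> forall z (s : seq 'I_(k1 + k2)),
    (size s <= p.2 + m)%N -> M g (lsubmx z) * N p.1 (rsubmx z) * `|diter s F z| <= S.
Proof.
move=> [_ bF]; elim: ws => [|p ws [S [S0 HS]]]; first by exists 0.
have [Sp HSp] := bF g p.1 (p.2 + m)%N.
exists (Num.max S Sp); split=> [|q /= [<-|qs] z s hs]; first by rewrite le_max S0.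
  by rewrite (le_trans (HSp z s hs)) // le_max lexx orbT.
by rewrite (le_trans (HS q qs z s hs)) // le_max lexx.
Qed.

Lemma section_bound F x (ws : seq (O * nat)) m : tensor_bounded F ->
  exists S d, [/\ 0 <= S, 0 < d & forall p, List.In p ws ->
    forall q y (s : seq 'I_(k1 + k2)), `|q - x| < d -> (size s <= p.2 + m)%N ->
      N p.1 y * `|diter s F (row_mx q y)| <= S].
Proof.
move=> tF; have [g [C [C0]]] := M_locally_pos x.
case/nbhs_ballP => d d0 MC; have [S [S0 HS]] := tensor_bounded_seq g ws m tF.
exists (S / C), d; split=> //; first by rewrite divr_ge0 // ltW.
move=> p pws q y s qx hs.
rewrite ler_pdivlMr // mulrC (le_trans _ (HS p pws (row_mx q y) s hs)) //.
rewrite row_mxKl row_mxKr -mulrA ler_wpM2r ?mulr_ge0 //.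
by apply: MC; rewrite -ball_normE /= distrC.
Qed.

Lemma inK_row_section F x : tensor_bounded F -> inK N (fun y => F (row_mx x y)).
Proof.
move=> tF; split=> [|w m]; first exact: smooth_row_mxr x tF.1.
have [S [d [_ d0 HS]]] := section_bound x [:: (w, m)] 0 tF.
apply: le_lt_trans (seminorm_le (B := S) _) (ltry _) => y nu hnu.
rewrite pderivE diter_row_mxr /=; apply: (HS (w, m)); first by left.
  by rewrite subrr normr0.
by rewrite size_map size_pderiv_seq addn0.
Qed.

Lemma section_taylor_bound F x i (ws : seq (O * nat)) : tensor_bounded F ->
  exists S d, [/\ 0 <= S, 0 < d & forall p, List.In p ws ->
    forall (t : R) y nu, `|t| < d -> (msize nu <= p.2)%N ->
      N p.1 y * `|pderiv nu (fun y => F (row_mx (t *: ev R i + x) y) - F (row_mx x y)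
                                   - t * pdiff (lshift k2 i) F (row_mx x y)) y|
        <= S * (`|t| * `|t|)].
Proof.
move=> tF; set L := lshift k2 i; have sF := tF.1.
have [S [d [S0 d0 HS]]] := section_bound x ws 2 tF.
exists S, d; split=> // p pws t y nu td hnu.
have s1 := smooth_row_mxr (t *: ev R i + x) sF.
have s2 := smooth_row_mxr x sF.
have s3 := smooth_row_mxr x (smooth_diter [:: L] sF).
set c := map (@rshift k1 k2) (pderiv_seq nu).
have sHc : smooth (diter c F) := smooth_diter c sF.
have shift (s : R) : row_mx (s *: ev R i + x) y = row_mx x y + s *: ev R L.
  by rewrite row_mx_shiftl addrC.
rewrite pderivE (diterB _ (smoothB s1 s2) (smoothZ _ s3)) (diterB _ s1 s2) (diterZ _ _ s3).
rewrite !diter_row_mxr /= -/c shift.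
have -> : diter c (pdiff L F) = pdiff L (diter c F).
  have pc : perm_eq (c ++ [:: L]) (L :: c) by rewrite perm_catC perm_refl.
  by rewrite -[pdiff L F]/(diter [:: L] F) -diter_cat (perm_diter sF pc).
apply: taylor_remainder_le_along => [s|s|//|s st]; first exact: (sHc [::]).2.
  exact: (sHc [:: L]).2.
rewrite -shift; apply: (HS p pws _ _ [:: L, L & c]).
  by rewrite addrK normrZ (le_lt_trans _ (le_lt_trans st td)) // ler_piMr ?norm_ev_le1.
by rewrite /= size_map size_pderiv_seq -addn2 leq_add2r.
Qed.

Lemma section_increment_bound F x (ws : seq (O * nat)) : tensor_bounded F ->
  exists S d, [/\ 0 <= S, 0 < d & forall p, List.In p ws ->
    forall x' y nu, `|x' - x| < d -> (msize nu <= p.2)%N ->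
      N p.1 y * `|pderiv nu (fun y => F (row_mx x' y) - F (row_mx x y)) y|
        <= S * `|x' - x|].
Proof.
move=> tF; have sF := tF.1.
have [S [d [S0 d0 HS]]] := section_bound x ws 1 tF.
have k0 : 0 < k1.+1%:R :> R by rewrite ltr0n.
exists (k1%:R * S), (d / k1.+1%:R); split=> [||p pws x' y nu xd hnu].
- by rewrite mulr_ge0.
- by rewrite divr_gt0.
rewrite pderivE (diterB _ (smooth_row_mxr x' sF) (smooth_row_mxr x sF)) !diter_row_mxr /=.
set Hc := diter _ F; have sHc : smooth Hc := smooth_diter _ sF.
rewrite -{1}(subrKC x x').
apply: (increment_le_coordinates (f := fun q => Hc (row_mx q y)) _ (N_ge0 _ _)) => //.
  move=> l q; rewrite (derivable_comp_affine _ (row_mx_shiftl q y l)).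
  exact: (sHc [::]).2.
move=> q l qx; have := diter_row_mxl Hc y [:: l]; move/(congr1 (fun f => f q)) => /= ->.
apply: (HS p pws q y (lshift k2 l :: _)); last first.
  by rewrite /= size_map size_pderiv_seq addn1.
apply: le_lt_trans qx _; rewrite ltr_pdivlMr // in xd.
apply: le_lt_trans xd; rewrite mulrC.
by apply: ler_wpM2l => //; rewrite ler_nat.
Qed.

Section DualPairing.
Variable v : ('rV[R]_k2 -> R) -> R.
Hypothesis v_dual : in_dual N v.

Definition hv F x := v (fun y => F (row_mx x y)).

Lemma hv_quotient_bound F x i : tensor_bounded F ->
  exists K d, [/\ 0 <= K, 0 < d & forall t : R, t != 0 -> `|t| < d ->
    `|t^-1 * (hv F (t *: ev R i + x) - hv F x) - hv (pdiff (lshift k2 i) F) x|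
      <= K * `|t|].
Proof.
move=> tF; set L := lshift k2 i.
have [ws [Cv [Cv0 Hv]]] := dual_bound v_dual.
have [S [d [S0 d0 HS]]] := section_taylor_bound x i ws tF.
exists (Cv * S), d; split=> // [|t t0 td]; first exact: mulr_ge0.
set f1 := fun y => F (row_mx (t *: ev R i + x) y).
set f2 := fun y => F (row_mx x y).
set f3 := fun y => pdiff L F (row_mx x y).
have K1 : inK N f1 := inK_row_section _ tF.
have K2 : inK N f2 := inK_row_section _ tF.
have K3 : inK N f3 := inK_row_section _ (tensor_bounded_diter [:: L] tF).
have K12 := inKB N_ge0 K1 K2.
have vg : v (fun y => f1 y - f2 y - t * f3 y) = v f1 - v f2 - t * v f3.
  by rewrite (dualB v_dual K12 (inKZ _ K3)) (dualB v_dual K1 K2) (dualZ v_dual _ K3).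
have -> : t^-1 * (hv F (t *: ev R i + x) - hv F x) - hv (pdiff L F) x =
    t^-1 * v (fun y => f1 y - f2 y - t * f3 y).
  by rewrite vg /hv -/f1 -/f2 -/f3; field.
have B0 : 0 <= S * (`|t| * `|t|) by rewrite !mulr_ge0.
have := Hv _ _ B0 (inKB N_ge0 K12 (inKZ _ K3)) (fun p pws y nu => HS p pws t y nu td).
move=> vle; rewrite normrM normfV (le_trans (ler_wpM2l _ vle)) ?invr_ge0 //.
have -> : `|t|^-1 * (Cv * (S * (`|t| * `|t|))) = Cv * S * `|t|.
  by field; rewrite normr_eq0.
by [].
Qed.

Lemma is_derive_hv F x i : tensor_bounded F ->
  is_derive x (ev R i) (hv F) (hv (pdiff (lshift k2 i) F) x).
Proof.
move=> tF; have [K [d [K0 d0 HK]]] := hv_quotient_bound x i tF.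
have cv : (fun t : R => t^-1 *: ((hv F \o shift x) (t *: ev R i) - hv F x))
    @ 0^' --> hv (pdiff (lshift k2 i) F) x.
  apply/cvgrPdist_lt => e e0; apply/nbhs_ballP.
  exists (Num.min d (e / (K + 1))) => [|t]; first by rewrite /= lt_min d0 divr_gt0 ?ltr_wpDl.
  rewrite -ball_normE /= sub0r normrN lt_min => /andP[td te] t0.
  rewrite distrC; apply: le_lt_trans (HK t t0 td) _.
  exact: mulr_lt_of_lt_divD1.
by apply: DeriveDef; [exact: cvgP cv | exact: cvg_lim cv].
Qed.

Lemma continuous_hv F : tensor_bounded F -> continuous (hv F).
Proof.
move=> tF x; have [ws [Cv [Cv0 Hv]]] := dual_bound v_dual.
have [S [d [S0 d0 HS]]] := section_increment_bound x ws tF.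
apply/(@cvgrPdist_lt _ _ _ (nbhs x) (nbhs_filter x)) => e e0; apply/nbhs_ballP.
exists (Num.min d (e / (Cv * S + 1))) => [|x'].
  by rewrite /= lt_min d0 divr_gt0 ?ltr_wpDl ?mulr_ge0.
rewrite -ball_normE /= lt_min distrC => /andP[xd xe].
have K1 := inK_row_section x' tF; have K2 := inK_row_section x tF.
rewrite distrC -(dualB v_dual K1 K2).
apply: le_lt_trans (Hv _ (S * `|x' - x|) _ (inKB N_ge0 K1 K2) _) _.
- by rewrite mulr_ge0.
- by move=> p pws y nu; apply: HS.
by rewrite mulrA mulr_lt_of_lt_divD1 ?mulr_ge0.
Qed.

Lemma diter_hv F s : tensor_bounded F ->
  diter s (hv F) = hv (diter (map (@lshift k1 k2) s) F).
Proof.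
move=> tF; elim: s => //= i s ->; apply/funext => x.
exact: (is_derive_hv x i (tensor_bounded_diter _ tF)).(derive_val).
Qed.

Lemma inK_hv h : inK (tensor_family M N) h -> inK M (hv h).
Proof.
move/inK_tensor_bounded => th; split=> [s|g m].
  have tF := tensor_bounded_diter (map (@lshift k1 k2) s) th.
  rewrite diter_hv //; split=> [x|i x]; first exact: continuous_hv.
  exact: (is_derive_hv x i tF).(ex_derive).
have [ws [Cv [Cv0 Hv]]] := dual_bound v_dual.
have [S [S0 HS]] := tensor_bounded_seq g ws m th.
apply: le_lt_trans (seminorm_le (B := Cv * S) _) (ltry _) => x mu hmu.
rewrite pderivE diter_hv //.
set F := diter _ h; have tF : tensor_bounded F := tensor_bounded_diter _ th.
have [->|Mx0] := eqVneq (M g x) 0; first by rewrite mul0r mulr_ge0.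
have Mx : 0 < M g x by rewrite lt_def Mx0 M_ge0.
rewrite mulrC -ler_pdivlMr // -mulrA.
apply: Hv (inK_row_section x tF) _ => [|p pws y nu hnu]; first by rewrite divr_ge0 ?M_ge0.
rewrite ler_pdivlMr // pderivE diter_row_mxr /F -diter_cat mulrC mulrA.
have := HS p pws (row_mx x y) (map (@rshift k1 k2) (pderiv_seq nu) ++
                                map (@lshift k1 k2) (pderiv_seq mu)).
rewrite row_mxKl row_mxKr; apply.
by rewrite size_cat !size_map !size_pderiv_seq leq_add.
Qed.

Lemma pderiv_hv h mu x : inK (tensor_family M N) h ->
  pderiv mu (hv h) x = v (fun y => pderiv mu (fun x' => h (row_mx x' y)) x).
Proof.
move/inK_tensor_bounded => th; rewrite pderivE diter_hv // /hv.
by congr v; apply/funext => y; rewrite pderivE diter_row_mxl.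
Qed.

End DualPairing.

End TensorSection.

Theorem lemma3p5 (R : realType) (k1 k2 : nat) (G O : Type)
    (M : G -> 'rV[R]_k1 -> R) (N : O -> 'rV[R]_k2 -> R)
    (h : 'rV[R]_(k1 + k2) -> R) :
  defining_family M -> defining_family N ->
  inK (tensor_family M N) h ->
  condI N -> condII N ->
  (forall x : 'rV[R]_k1, inK N (fun y => h (row_mx x y))) /\
  (forall v : ('rV[R]_k2 -> R) -> R, in_dual N v ->
     inK M (fun x => v (fun y => h (row_mx x y))) /\
     forall (mu : mindex k1) (x : 'rV[R]_k1),
       pderiv mu (fun x' => v (fun y => h (row_mx x' y))) x =
       v (fun y => pderiv mu (fun x' => h (row_mx x' y)) x)).
Proof.
move=> [M_ge0 [_ [_ [_ [_ M_locally_pos]]]]] [N_ge0 _] Kh _ _.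
have th := inK_tensor_bounded Kh.
split=> [x|v v_dual]; first exact (inK_row_section N_ge0 M_locally_pos x th).
split=> [|mu x]; first exact (inK_hv M_ge0 N_ge0 M_locally_pos v_dual Kh).
exact (pderiv_hv N_ge0 M_locally_pos v_dual mu x Kh).
Qed.
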